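(* For all integers $d\ge 2$, $g\ge 1$ and $t\ge 4$ there exist positive integers $m,n$ with $n/m\ge t$ and a simple graph $G'$ of girth at least $g$ whose vertex set is partitioned into sets $A$ and $B$ with $|A|=m$ and $|B|=n$, such that every edge of $G'$ joins a vertex of $A$ to a vertex of $B$ and every vertex of $B$ has degree at least $d$ in $G'$.
   Context: The girth of a graph is the length of its shortest cycle (infinite for a forest). *)

From mathcomp Require Import all_boot.
Set Implicit Arguments. Unset Strict Implicit. Unset Printing Implicit Defensive.

Definition simple_graph (V : finType) (e : rel V) : Prop :=
  symmetric e /\ irreflexive e.

Definition is_graph_cycle (V : finType) (e : rel V) (c : seq V) : bool :=
  [&& 3 <= size c, uniq c & cycle e c].

(* girth >= g : every cycle has length at least g (true for forests,
   whose girth is infinite). *)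
Definition girth_ge (V : finType) (e : rel V) (g : nat) : Prop :=
  forall c : seq V, is_graph_cycle e c -> g <= size c.

Definition deg (V : finType) (e : rel V) (v : V) : nat := #|[set w | e v w]|.

From mathcomp Require Import all_boot zify.
Set Implicit Arguments. Unset Strict Implicit. Unset Printing Implicit Defensive.

(* A greedy bipartite construction in the style of Erdős–Sachs.  Put
   |A| = m and |B| = n = t m, and repeatedly join a vertex b of B of degree
   < d to a vertex a of A of degree < D = 2dt lying at distance > g from b;
   such an edge closes no cycle of length < g + 2.  A suitable a exists as
   long as the graph has at most dn edges: at most dn/D = m/2 vertices of A
   are saturated and at most (D+1)^g = m/4 lie within distance g of b.
   Since the degrees in B stay <= d, the process stops after at most dn
   steps, and it can only stop when every vertex of B has degree d. *)

Section Ball.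
Variables (V : finType) (e : rel V).

Definition nbhd (S : {set V}) := S :|: \bigcup_(v in S) [set u | e v u].

Definition ball c j := iter j nbhd [set c].

Lemma ballS c j : ball c j.+1 = nbhd (ball c j).
Proof. by rewrite /ball iterS. Qed.

Lemma subset_ball c j k : j <= k -> ball c j \subset ball c k.
Proof.
elim: k => [|k IHk]; first by rewrite leqn0 => /eqP ->.
rewrite leq_eqVlt => /orP[/eqP -> // | /IHk sub_jk].
by apply: subset_trans sub_jk _; rewrite ballS subsetUl.
Qed.

Lemma ball_center c j : c \in ball c j.
Proof. exact: subsetP (subset_ball c (leq0n j)) _ (set11 c). Qed.

Lemma notin_ball_lt c u r k : u \notin ball c r -> u \in ball c k -> r < k.
Proof.
rewrite ltnNge => u_far u_k; apply: contra u_far => le_kr.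
exact: subsetP (subset_ball c le_kr) _ u_k.
Qed.

Lemma leq_card_bigcup (S : {set V}) (F : V -> {set V}) :
  #|\bigcup_(v in S) F v| <= \sum_(v in S) #|F v|.
Proof.
elim/big_rec2: _ => [|v X n _ IH]; first by rewrite cards0.
by rewrite cardsU (leq_trans (leq_subr _ _)) ?leq_add.
Qed.

Lemma card_ball_le D c j : (forall v, deg e v <= D) -> #|ball c j| <= D.+1 ^ j.
Proof.
move=> degD; elim: j => [|j IHj]; first by rewrite /ball cards1.
rewrite ballS /nbhd cardsU expnSr mulnS (leq_trans (leq_subr _ _)) //.
rewrite leq_add // (leq_trans (leq_card_bigcup _ _)) //.
apply: (@leq_trans (\sum_(v in ball c j) D)).
  by apply: leq_sum => v _; apply: degD.
by rewrite sum_nat_const leq_mul2r IHj orbT.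
Qed.

Lemma mem_ball_last c s : path e c s -> last c s \in ball c (size s).
Proof.
elim/last_ind: s => [|s z IHs]; first by rewrite /ball set11.
rewrite rcons_path last_rcons size_rcons ballS => /andP[/IHs s_in e_z].
by apply/setUP; right; apply/bigcupP; exists (last c s); rewrite ?inE.
Qed.

Lemma mem_ball_head u s :
  symmetric e -> path e u s -> u \in ball (last u s) (size s).
Proof.
move=> e_sym; elim: s u => [|v s IHs] u /=; first by rewrite /ball set11.
case/andP=> e_uv /IHs v_in; apply/setUP; right.
by apply/bigcupP; exists v; rewrite ?inE 1?e_sym.
Qed.

End Ball.

Lemma girth_ge_subrel (V : finType) (e e' : rel V) G :
  subrel e' e -> girth_ge e G -> girth_ge e' G.
Proof.
move=> sub_e'e eG c /and3P[c3 uc cc]; apply: eG.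
by rewrite /is_graph_cycle c3 uc (sub_cycle sub_e'e cc).
Qed.

Lemma uniq_arcs_avoid (T : eqType) (x y : T) p1 p2 :
  uniq (x :: p1 ++ y :: p2) -> all [predC [:: x; y]] (p1 ++ p2).
Proof.
rewrite (perm_uniq (_ : perm_eq _ (x :: y :: p1 ++ p2))); last first.
  by rewrite perm_cons -cat1s perm_catCA.
case/and3P=> x_out y_out _; apply/allP => z z_in; rewrite !inE negb_or.
apply/andP; split.
  by apply: contraNneq x_out => <-; rewrite inE z_in orbT.
by apply: contraNneq y_out => <-.
Qed.

Section AddEdge.
Variables (V : finType) (e : rel V) (x y : V).

Definition add_edge : rel V :=
  fun u v => [|| e u v, (u == x) && (v == y) | (u == y) && (v == x)].

Lemma add_edge_avoid z : z \in [:: x; y] -> {in predC1 z &, subrel add_edge e}.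
Proof.
rewrite !inE => /orP[]/eqP-> u v /= uz vz;
  by rewrite /add_edge (negbTE uz) (negbTE vz) ?andbF ?orbF.
Qed.

Lemma add_edge_inner u v : (u \notin [:: x; y]) || (v \notin [:: x; y]) ->
  add_edge u v -> e u v.
Proof.
rewrite !inE !negb_or => /orP[/andP[ux uy] | /andP[vx vy]] /or3P[] //;
  by rewrite ?(negbTE ux) ?(negbTE uy) ?(negbTE vx) ?(negbTE vy) ?andbF.
Qed.

Lemma add_edge_arc u q w : all [predC [:: x; y]] q ->
  path add_edge u (rcons q w) -> q != [::] -> path e u (rcons q w).
Proof.
case: q => [// | z q] /= /andP[z_in q_in] /andP[a_uz].
rewrite !rcons_path => /andP[a_zq a_lw] _.
rewrite (add_edge_inner _ a_uz) ?z_in ?orbT //=.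
have zq_in : all [predC [:: x; y]] (z :: q) by rewrite /= z_in.
have lq_in : last z q \notin [:: x; y] := allP zq_in _ (mem_last z q).
rewrite (add_edge_inner _ a_lw) ?lq_in // andbT.
apply: sub_in_path zq_in a_zq => a b a_in _; rewrite inE in a_in.
by apply: add_edge_inner; rewrite a_in.
Qed.

Hypothesis e_sym : symmetric e.

Lemma girth_ge_add_edge r : y \notin ball e x r -> girth_ge e r.+2 ->
  girth_ge add_edge r.+2.
Proof.
move=> y_far eG c /and3P[c3 uc cc].
have xy : x != y by apply: contraNneq y_far => <-; apply: ball_center.
have old_cycle z : z \in [:: x; y] -> z \notin c -> r.+2 <= size c.
  move=> z_xy z_out; apply: eG; rewrite /is_graph_cycle c3 uc /=.
  apply: (sub_in_cycle (add_edge_avoid z_xy)) cc.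
  by apply/allP => u u_in /=; apply: contraNneq z_out => <-.
have [xc|] := boolP (x \in c); last by apply: old_cycle; rewrite mem_head.
have [yc|] := boolP (y \in c); last by apply: old_cycle; rewrite !inE eqxx orbT.
case: (rot_to_arc uc xc yc xy) => i p1 p2 _ _ def_c.
move: c3 uc cc.
rewrite -(size_rot i) -(rot_uniq i) -(rot_cycle i) {}def_c /= size_cat /=.
move=> c3 /uniq_arcs_avoid; rewrite all_cat => /andP[p1_in p2_in].
rewrite rcons_cat cat_path /= => /and3P[arc1 e_y arc2].
have far k : y \in ball e x k.+1 -> r.+1 < k.+2 by move/(notin_ball_lt y_far).
case: p1 => [|z p1] in c3 p1_in arc1 e_y *.
  case: p2 => [//|z p2] in c3 p2_in arc2 *.
  have /(mem_ball_head e_sym) := add_edge_arc p2_in arc2 isT.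
  by rewrite last_rcons size_rcons => /far.
have /mem_ball_last : path e x (rcons (z :: p1) y).
  by apply: add_edge_arc; rewrite // rcons_path arc1.
rewrite last_rcons size_rcons => /far /leq_trans; apply.
by rewrite ltnS addnS ltnS leq_addr.
Qed.

End AddEdge.

Lemma card_set_sum (T : finType) (P : pred T) : #|[set x | P x]| = \sum_x P x.
Proof.
by rewrite -sum1dep_card big_mkcond; apply: eq_bigr => x _; case: (P x).
Qed.

Section Bipartite.
Variables m n : nat.
Implicit Types E : {set 'I_m * 'I_n}.

Definition bipartite_rel E : rel ('I_m + 'I_n) := fun u v =>
  match u, v with
  | inl a, inr b | inr b, inl a => (a, b) \in E
  | _, _ => false
  end.

Lemma bipartite_rel_sym E : symmetric (bipartite_rel E).
Proof. by case=> [a|b] [a'|b']. Qed.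

Lemma bipartite_rel_irr E : irreflexive (bipartite_rel E).
Proof. by case. Qed.

Definition ldeg E a := #|[set b | (a, b) \in E]|.
Definition rdeg E b := #|[set a | (a, b) \in E]|.

Lemma deg_inl E a : deg (bipartite_rel E) (inl a) = ldeg E a.
Proof.
rewrite /deg /ldeg -(card_imset _ (@inr_inj 'I_m 'I_n)).
apply: eq_card => -[a'|b].
  by rewrite !inE; apply/esym/imsetP => -[].
by rewrite !inE mem_imset ?inE //; apply: inr_inj.
Qed.

Lemma deg_inr E b : deg (bipartite_rel E) (inr b) = rdeg E b.
Proof.
rewrite /deg /rdeg -(card_imset _ (@inl_inj 'I_m 'I_n)).
apply: eq_card => -[a|b'].
  by rewrite !inE mem_imset ?inE //; apply: inl_inj.
by rewrite !inE; apply/esym/imsetP => -[].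
Qed.

Lemma sum_ldeg E : \sum_a ldeg E a = #|E|.
Proof.
under eq_bigr do rewrite /ldeg card_set_sum.
rewrite -sum1_card pair_big [RHS]big_mkcond /=.
by apply: eq_bigr => -[a b] _; case: ((a, b) \in E).
Qed.

Lemma sum_rdeg E : \sum_b rdeg E b = #|E|.
Proof.
rewrite -sum_ldeg; under eq_bigr do rewrite /rdeg card_set_sum.
by rewrite exchange_big; apply: eq_bigr => a _; rewrite /ldeg card_set_sum.
Qed.

Lemma ldeg_setU1 E a0 b0 a : ldeg ((a0, b0) |: E) a <= ldeg E a + (a == a0).
Proof.
rewrite /ldeg; have [-> | ne] := eqVneq a a0.
  rewrite addn1; apply: (@leq_trans #|b0 |: [set b | (a0, b) \in E]|).
    by apply/subset_leq_card/subsetP => b; rewrite !inE xpair_eqE eqxx.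
  by rewrite cardsU1 addnC -addn1 leq_add2l leq_b1.
rewrite addn0 subset_leq_card //; apply/subsetP => b.
by rewrite !inE xpair_eqE (negbTE ne).
Qed.

Lemma rdeg_setU1 E a0 b0 b : rdeg ((a0, b0) |: E) b <= rdeg E b + (b == b0).
Proof.
rewrite /rdeg; have [-> | ne] := eqVneq b b0.
  rewrite addn1; apply: (@leq_trans #|a0 |: [set a | (a, b0) \in E]|).
    by apply/subset_leq_card/subsetP => a; rewrite !inE xpair_eqE eqxx andbT.
  by rewrite cardsU1 addnC -addn1 leq_add2l leq_b1.
rewrite addn0 subset_leq_card //; apply/subsetP => a.
by rewrite !inE xpair_eqE (negbTE ne) andbF.
Qed.

Lemma bipartite_rel_setU1 E a0 b0 :
  subrel (bipartite_rel ((a0, b0) |: E))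
         (add_edge (bipartite_rel E) (inr b0) (inl a0)).
Proof.
case=> [a|b] [a'|b'] //=; rewrite !inE xpair_eqE /add_edge /=;
  by case/orP=> [/andP[/eqP-> /eqP->] | ->]; rewrite ?eqxx ?orbT.
Qed.

Lemma card_saturated E D : #|[set a | D <= ldeg E a]| * D <= #|E|.
Proof.
rewrite -sum_ldeg -sum_nat_cond_const big_mkcond /=.
by apply: leq_sum => a _; case: ifP; rewrite ?inE.
Qed.

End Bipartite.

Section Greedy.
Variables m n d D r : nat.
Hypotheses (le_dD : d <= D) (r_gt0 : 0 < r).
Hypothesis mD_large : d * n + D * D.+1 ^ r < D * m.
Implicit Types E : {set 'I_m * 'I_n}.

Definition admissible E :=
  [/\ forall a, ldeg E a <= D, forall b, rdeg E b <= d
    & girth_ge (bipartite_rel E) r.+2].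

Lemma admissible_deg E : admissible E -> forall v, deg (bipartite_rel E) v <= D.
Proof.
case=> ldegD rdegd _ [a|b]; first by rewrite deg_inl.
by rewrite deg_inr (leq_trans (rdegd b)).
Qed.

Lemma card_admissible E : admissible E -> #|E| <= d * n.
Proof.
case=> _ rdegd _; rewrite -sum_rdeg (@leq_trans (\sum_(b : 'I_n) d)) //.
  by apply: leq_sum => b _.
by rewrite sum_nat_const card_ord mulnC.
Qed.

Lemma card_near E b0 : admissible E ->
  #|[set a | inl a \in ball (bipartite_rel E) (inr b0) r]| <= D.+1 ^ r.
Proof.
move/admissible_deg/card_ball_le => /(_ (inr b0) r); apply: leq_trans.
rewrite -(card_imset _ (@inl_inj 'I_m 'I_n)); apply/subset_leq_card/subsetP.
by move=> v /imsetP[a a_in ->]; rewrite inE in a_in.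
Qed.

Lemma exists_far_unsaturated E b0 : admissible E ->
  exists a0, ldeg E a0 < D /\ inl a0 \notin ball (bipartite_rel E) (inr b0) r.
Proof.
move=> adm; set Near := [set a | inl a \in ball (bipartite_rel E) (inr b0) r].
case: (pickP [pred a | (ldeg E a < D) && (a \notin Near)]).
  by move=> a0 /andP[ldeg_a0]; rewrite inE; exists a0.
move=> none; exfalso; set Sat := [set a | D <= ldeg E a].
have cover : m <= #|Sat| + #|Near|.
  rewrite -{1}(card_ord m) -cardsT (leq_trans _ (leq_card_setU Sat Near)) //.
  apply/subset_leq_card/subsetP => a _; move: (none a); rewrite !inE /=.
  by rewrite ltnNge; case: (D <= ldeg E a); case: (inl a \in _).
have sat_le : #|Sat| * D <= d * n.
  exact: leq_trans (card_saturated E D) (card_admissible adm).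
have near_le : D * #|Near| <= D * D.+1 ^ r.
  by rewrite leq_mul2l card_near ?orbT.
have : D * m <= #|Sat| * D + D * #|Near|.
  by rewrite [_ * D]mulnC -mulnDr leq_mul2l cover orbT.
move: mD_large sat_le near_le; lia.
Qed.

Lemma admissible_extend E b0 : admissible E -> rdeg E b0 < d ->
  exists E', admissible E' /\ #|E'| = #|E|.+1.
Proof.
move=> adm rdeg_b0; have [ldegD rdegd girthE] := adm.
have [a0 [ldeg_a0 a0_far]] := exists_far_unsaturated b0 adm.
have a0b0_new : (a0, b0) \notin E.
  apply: contra a0_far => a0b0_in; apply: subsetP (subset_ball _ _ r_gt0) _ _.
  by apply: (@mem_ball_last _ _ _ [:: inl a0]); rewrite /= a0b0_in.
exists ((a0, b0) |: E); split; last by rewrite cardsU1 a0b0_new.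
split.
- move=> a; apply: leq_trans (ldeg_setU1 _ _ _ _) _.
  by have [->|_] := eqVneq a a0; rewrite ?addn1 ?addn0.
- move=> b; apply: leq_trans (rdeg_setU1 _ _ _ _) _.
  by have [->|_] := eqVneq b b0; rewrite ?addn1 ?addn0.
- apply: girth_ge_subrel (@bipartite_rel_setU1 _ _ E a0 b0) _.
  exact: (girth_ge_add_edge (@bipartite_rel_sym _ _ E) a0_far girthE).
Qed.

Lemma admissible0 : admissible set0.
Proof.
split=> [a | b | [|u [|v c]] /and3P[// _]] /=.
- by rewrite /ldeg (@eq_card0 _ [set b | (a, b) \in set0]) // => b; rewrite !inE.
- by rewrite /rdeg (@eq_card0 _ [set a | (a, b) \in set0]) // => a; rewrite !inE.
by move=> _; case: u v => [a|b] [a'|b']; rewrite /= ?inE.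
Qed.

Lemma exists_admissible_rdeg_ge :
  exists E, admissible E /\ forall b, d <= rdeg E b.
Proof.
suff [E [adm [E_big | rdeg_ge]]] : exists E, admissible E /\
    ((d * n).+1 <= #|E| \/ forall b, d <= rdeg E b).
- by have := card_admissible adm; rewrite leqNgt E_big.
- by exists E.
elim: (d * n).+1 => [|k [E [adm [le_kE | rdeg_ge]]]].
- by exists set0; split; [exact: admissible0 | left].
- have [/existsP[b0 b0_low] | ] := boolP [exists b, rdeg E b < d].
    have [E' [adm' card_E']] := admissible_extend adm b0_low.
    by exists E'; split; last by left; rewrite card_E' ltnS.
  rewrite negb_exists => /forallP rdeg_ge.
  by exists E; split; last by right => b; rewrite leqNgt rdeg_ge.
- by exists E; split; last by right.
Qed.

End Greedy.

Theorem lemma5p10 (d g t : nat) (hd : 2 <= d) (hg : 1 <= g) (ht : 4 <= t) :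
  exists (m n : nat), [/\ 0 < m, 0 < n & t * m <= n] /\
  exists (V : finType) (e : rel V) (A B : {set V}),
    [/\ simple_graph e, girth_ge e g,
        A :&: B = set0 /\ A :|: B = [set: V],
        #|A| = m /\ #|B| = n
      & (forall x y, e x y -> (x \in A) && (y \in B) || (x \in B) && (y \in A))
        /\ (forall v, v \in B -> d <= deg e v)].
Proof.
pose D := 2 * d * t; pose K := D.+1 ^ g; pose m := 4 * K; pose n := t * m.
have K_gt0 : 0 < K by rewrite expn_gt0.
have le_dD : d <= D by rewrite /D; nia.
have mD_large : d * n + D * K < D * m by rewrite /n /m /D; nia.
have [E [[_ _ girthE] rdeg_ge]] := exists_admissible_rdeg_ge le_dD hg mD_large.
exists m, n; split; first by split; rewrite /n /m; nia.
pose A := [set x : 'I_m + 'I_n | if x is inl _ then true else false].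
pose B := [set x : 'I_m + 'I_n | if x is inr _ then true else false].
exists ('I_m + 'I_n)%type, (bipartite_rel E), A, B; split.
- by split; [exact: bipartite_rel_sym | exact: bipartite_rel_irr].
- by move=> c /girthE; apply: leq_trans; rewrite leqW.
- by split; apply/setP => -[a|b]; rewrite !inE.
- rewrite !card_set_sum !big_sumType /= !sum_nat_const !card_ord.
  by rewrite !muln0 ?addn0 !muln1.
split; first by case=> [a|b] [a'|b']; rewrite !inE.
by case=> [a|b]; rewrite inE // deg_inr.
Qed.
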